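(* For every hypothesis class $\mathcal H$ with VC dimension $d$ and coVC dimension $k$, there exists a protocol for the realizability problem over $\mathcal H$ with sample complexity $O(dk^2\log k\log|S|)$, where $|S|$ is the size of the joint input sample.
   Context: Communication model: $\mathcal Z=\mathcal X\times\{\pm1\}$ is the set of examples, a sample is a finite sequence of examples. Alice receives sample $S_a$, Bob receives $S_b$, joint sample $S=(S_a,S_b)$ (arbitrary split). A deterministic protocol proceeds by messages, each either a single example from the sender's own input sample or a bit, depending only on the sender's input and previous messages; output determined by the messages; each example or bit costs one unit; sample complexity is the maximum number of units transmitted. The realizability problem: decide whether some $h\in\mathcal H$ has $h(x)=y$ for all $(x,y)\in S$. A subsample of $S$ is a sample all of whose examples appear in $S$; the coVC dimension of $\mathcal H$ is the smallest $k$ such that every non-realizable sample has a non-realizable subsample of size at most $k$. *)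

From mathcomp Require Import all_boot.
From Stdlib Require Lists.List.
Set Implicit Arguments. Unset Strict Implicit. Unset Printing Implicit Defensive.

(** Examples: Z = X x {+1,-1}; the label +1 is [true], -1 is [false]. *)
Definition example (X : Type) := (X * bool)%type.
Definition sample (X : Type) := seq (example X).

Definition hclass (X : Type) := (X -> bool) -> Prop.

Definition realizable X (H : hclass X) (S : sample X) : Prop :=
  exists h, H h /\ forall z, Stdlib.Lists.List.In z S -> h z.1 = z.2.

Definition subsample X (T S : sample X) : Prop :=
  forall z, Stdlib.Lists.List.In z T -> Stdlib.Lists.List.In z S.

Definition shatters X (H : hclass X) n (xs : 'I_n -> X) : Prop :=
  forall lab : 'I_n -> bool, exists h, H h /\ forall i, h (xs i) = lab i.

Definition VC_dim X (H : hclass X) (d : nat) : Prop :=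
  (exists xs : 'I_d -> X, shatters H xs) /\
  (forall n (xs : 'I_n -> X), shatters H xs -> n <= d).

Definition coVC_bound X (H : hclass X) (k : nat) : Prop :=
  forall S : sample X, ~ realizable H S ->
    exists T : sample X, subsample T S /\ size T <= k /\ ~ realizable H T.

Definition coVC_dim X (H : hclass X) (k : nat) : Prop :=
  coVC_bound H k /\ forall k', coVC_bound H k' -> k <= k'.

Inductive message (X : Type) :=
| MEx of example X
| MBit of bool.

Inductive party := Alice | Bob.

Record protocol (X : Type) := Protocol {
  (* who speaks next, as a function of the transcript; None = halt *)
  next_speaker : seq (message X) -> option party;
  alice_msg : sample X -> seq (message X) -> message X;
  bob_msg : sample X -> seq (message X) -> message X;
  output : seq (message X) -> bool
}.

Definition msg_from X (S : sample X) (m : message X) : Prop :=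
  match m with MEx z => Stdlib.Lists.List.In z S | MBit _ => True end.

Definition valid_protocol X (P : protocol X) : Prop :=
  (forall S tr, msg_from S (alice_msg P S tr)) /\
  (forall S tr, msg_from S (bob_msg P S tr)).

Definition step X (P : protocol X) (Sa Sb : sample X) (tr : seq (message X)) :=
  match next_speaker P tr with
  | None => tr
  | Some Alice => rcons tr (alice_msg P Sa tr)
  | Some Bob => rcons tr (bob_msg P Sb tr)
  end.

Definition transcript X (P : protocol X) (Sa Sb : sample X) (n : nat) :=
  iter n (step P Sa Sb) [::].

(** On input (Sa, Sb), P halts after transmitting at most B units (each
    message, example or bit, costs one unit) and outputs the correct answer to
    the realizability problem for the joint sample S = (Sa, Sb). *)
Definition solves_within X (H : hclass X) (P : protocol X) (Sa Sb : sample X)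
    (B : nat) : Prop :=
  next_speaker P (transcript P Sa Sb B) = None /\
  (output P (transcript P Sa Sb B) <-> realizable H (Sa ++ Sb)).

(* For [T = r * O(log |S|)] rounds, with [r > 8 k], each party sends a
   [1/r]-net of its own sample weighted by [2 ^ (number of earlier hypotheses
   erring on the example)]; by the double-sampling argument and the
   Sauer-Shelah lemma such nets of size [O(d r log r)] exist.  Both parties then
   pick a hypothesis of [H] consistent with the two nets, which errs on at most
   a [1/r] fraction of either weight, so each total weight grows by a factor at
   most [1 + 1/r] per round.  If the joint sample is not realizable, every
   hypothesis errs on its coVC witness of at most [k] examples, so one example
   of the witness gets weight [2 ^ (T / k)], more than [(1 + 1/r)^T |S|]
   allows.  Conversely, if the joint sample is realizable so are all the nets. *)

From mathcomp Require Import all_boot zify.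
From Stdlib Require Import Classical ClassicalEpsilon FunctionalExtensionality.
Set Implicit Arguments. Unset Strict Implicit. Unset Printing Implicit Defensive.

Import Stdlib.Lists.List (In).

Lemma leq_exp2rW m n e : m <= n -> m ^ e <= n ^ e.
Proof. by case: e => [|e] // le_mn; rewrite leq_exp2r. Qed.

Lemma succ_expn_subn_le n j : j <= n -> n.+1 ^ j * (n - j) <= n ^ j.+1.
Proof.
elim: j => [|j IH] le_jn; first by rewrite expn0 mul1n subn0 expn1.
have IHj := IH (ltnW le_jn).
have step : n.+1 * (n - j.+1) <= (n - j) * n by nia.
rewrite expnS [n ^ j.+2]expnS.
move: IHj step; set A := n.+1 ^ j; set B := n ^ j.+1 => IHj step.
have scaled_step : A * (n.+1 * (n - j.+1)) <= A * ((n - j) * n).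
  by rewrite leq_mul2l step orbT.
have scaled_IH : A * (n - j) * n <= B * n by rewrite leq_mul2r IHj orbT.
nia.
Qed.

(* Apply [succ_expn_subn_le] with [j = n/2] to each half of the exponent. *)
Lemma succ_expn_le n : n.+1 ^ n <= 8 * n ^ n.
Proof.
case: n => [|n] //; set m := n.+1; set h := m./2.
have split_m : m = h + h + odd m by have := odd_double_half m; rewrite -addnn -/h; lia.
have half_bound : m.+1 ^ h <= 2 * m ^ h.
  have le_hm : h <= m by lia.
  have pos : 0 < m - h by lia.
  have := succ_expn_subn_le le_hm; rewrite expnSr -(leq_pmul2r pos).
  move: (m.+1 ^ h) (m ^ h) => Q P bound.
  have : P * m <= P * (2 * (m - h)) by rewrite leq_mul2l; apply/orP; right; lia.
  nia.
have odd_bound : m.+1 ^ odd m <= 2 * m ^ odd m by case: (odd m); rewrite ?expn1 ?expn0; lia.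
rewrite {2 4}split_m !expnD.
apply: leq_trans (leq_mul (leq_mul half_bound half_bound) odd_bound) _.
nia.
Qed.

Lemma expn_self_le_fact n : n ^ n <= 8 ^ n * n`!.
Proof.
elim: n => [|n IH] //.
rewrite expnS factS expnS.
have := succ_expn_le n.
move: IH; set P := n ^ n; set Q := n.+1 ^ n; set E := 8 ^ n; set F := n`! => IH bound.
have : n.+1 * Q <= n.+1 * (8 * P) by rewrite leq_mul2l bound orbT.
have : n.+1 * (8 * P) <= n.+1 * (8 * (E * F)) by rewrite !leq_mul2l IH !orbT.
nia.
Qed.

Lemma ffact_le_expn n m : n ^_ m <= n ^ m.
Proof.
elim: m n => [|m IH] n //.
rewrite ffactnS expnS leq_mul2l; apply/orP; right.
by apply: leq_trans (IH _) _; apply/leq_exp2rW/leq_pred.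
Qed.

Lemma bin_fact_le_expn n m : 'C(n, m) * m`! <= n ^ m.
Proof. by rewrite bin_ffact ffact_le_expn. Qed.

Lemma sum_bin_le_bin n d : \sum_(i < d.+1) 'C(n, i) <= 'C(n + d, d).
Proof.
elim: d => [|d IH]; first by rewrite big_ord1 !bin0.
rewrite big_ord_recr /= addnS binS addnC leq_add //.
by apply: leq_bin2l; rewrite leq_addr.
Qed.

Section Shattering.
Variable U : finType.
Implicit Types (G : {set {set U}}) (A B S V Y : {set U}).

Definition shattered G S : bool :=
  [forall B : {set U}, (B \subset S) ==> [exists A in G, A :&: S == B]].

Definition shattered_sets G := [set S | shattered G S].

Lemma shatteredP G S :
  reflect (forall B, B \subset S -> exists2 A, A \in G & A :&: S = B) (shattered G S).
Proof.
apply: (iffP forallP) => [sh B sBS | sh B].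
  by have /implyP/(_ sBS)/existsP[A /andP[AG /eqP <-]] := sh B; exists A.
apply/implyP => /sh[A AG eB]; apply/existsP; exists A; by rewrite AG eB eqxx.
Qed.

Lemma shattered0 G : G != set0 -> shattered G set0.
Proof.
case/set0Pn => A AG; apply/shatteredP => B; rewrite subset0 => /eqP ->.
by exists A; rewrite ?setI0.
Qed.

Section Split.
Variables (G : {set {set U}}) (y : U).

Definition delete_family := [set A :\ y | A in G].
Definition link_family := [set A in G | (y \notin A) && (y |: A \in G)].

(* [delete_family] is the union, and [link_family] the intersection, of the
   members avoiding [y] and of the sets [A :\ y] for the members [A] containing [y]. *)
Lemma card_delete_link : #|G| <= #|delete_family| + #|link_family|.
Proof.
set Gout := [set A in G | y \notin A]; set Gin := [set A in G | y \in A].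
set Gin' := [set A :\ y | A in Gin].
have cardG : #|G| = #|Gout| + #|Gin|.
  rewrite -(cardsID [set A : {set U} | y \in A] G) addnC.
  by congr (_ + _); apply: eq_card => A; rewrite !inE andbC.
have cardGin : #|Gin'| = #|Gin|.
  apply: card_in_imset => A B; rewrite !inE => /andP[_ yA] /andP[_ yB] eAB.
  by rewrite -(setD1K yA) -(setD1K yB) eAB.
have -> : delete_family = Gout :|: Gin'.
  apply/setP => B; rewrite inE; apply/imsetP/orP => [[A AG ->]|].
    case yA: (y \in A); [right | left].
      by apply/imsetP; exists A; rewrite // inE AG yA.
    by rewrite inE (setDidPl _) ?AG ?yA // disjoint_sym disjoints1 yA.
  case => [| /imsetP[A]]; last by rewrite inE => /andP[AG _] ->; exists A.
  rewrite inE => /andP[BG yB]; exists B => //.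
  by rewrite (setDidPl _) // disjoint_sym disjoints1.
have -> : link_family = Gout :&: Gin'.
  apply/setP => B; rewrite /link_family !inE; apply/idP/idP.
    case/andP=> BG /andP[yB yBG]; rewrite BG yB /=.
    by apply/imsetP; exists (y |: B); rewrite ?setU1K // inE yBG setU11.
  case/andP=> /andP[BG yB] /imsetP[A]; rewrite inE => /andP[AG yA] eB.
  by rewrite BG yB /= eB setD1K.
by rewrite cardsUI cardGin cardG.
Qed.

Lemma shattered_delete S : shattered delete_family S -> shattered G S /\ y \notin S.
Proof.
move/shatteredP=> sh.
have yS : y \notin S.
  have [_ /imsetP[A _ ->] <-] := sh S (subxx S).
  by rewrite !inE eqxx.
split=> //; apply/shatteredP => B /sh[_ /imsetP[A AG ->] <-].
exists A => //; apply/setP => x; rewrite !inE.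
by case: (x =P y) => [-> | _]; rewrite ?(negbTE yS) ?andbF.
Qed.

Lemma shattered_link S : shattered link_family S -> shattered G (y |: S) /\ y \notin S.
Proof.
move/shatteredP=> sh.
have yS : y \notin S.
  have [A] := sh S (subxx S); rewrite inE => /andP[_ /andP[yA _]] <-.
  by rewrite inE (negbTE yA).
split=> //; apply/shatteredP => B sBS.
have sB'S : B :\ y \subset S.
  apply/subsetP => x; rewrite !inE => /andP[xy xB].
  by move/subsetP: sBS => /(_ x xB); rewrite !inE (negbTE xy).
have [A] := sh _ sB'S; rewrite inE => /andP[AG /andP[yA yAG]] eA.
case yB: (y \in B); [exists (y |: A) | exists A] => //;
  apply/setP => x; move/setP: eA => /(_ x); rewrite !inE;
  case: (x =P y) => [-> | _] //=; by rewrite yB ?(negbTE yA).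
Qed.

(* Sets shattered by [delete_family] avoid [y], while the sets shattered by
   [link_family], extended by [y], contain it. *)
Lemma card_shattered_delete_link :
  #|shattered_sets delete_family| + #|shattered_sets link_family| <=
  #|shattered_sets G|.
Proof.
set Sh1 := shattered_sets link_family; set Sh1' := [set y |: S | S in Sh1].
have -> : #|Sh1| = #|Sh1'|.
  apply/esym/card_in_imset => S T.
  rewrite !inE => /shattered_link[_ yS] /shattered_link[_ yT] eST.
  by rewrite -(setU1K yS) -(setU1K yT) eST.
rewrite -cardsUI.
have -> : shattered_sets delete_family :&: Sh1' = set0.
  apply/setP => S; rewrite !inE; apply/negP => /andP[/shattered_delete[_ yS]].
  by case/imsetP=> T _ eS; rewrite eS setU11 in yS.
rewrite cards0 addn0; apply: subset_leq_card; rewrite subUset.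
apply/andP; split; apply/subsetP.
  by move=> S; rewrite !inE => /shattered_delete[].
by move=> T /imsetP[S]; rewrite !inE => /shattered_link[? _] ->.
Qed.

End Split.

Lemma card_le_shattered_sets G : #|G| <= #|shattered_sets G|.
Proof.
move: {2}#|[set: U]| (erefl #|[set: U]|) => n.
have subT : forall A, A \in G -> A \subset [set: U] by move=> A _; apply: subsetT.
elim: n G [set: U] subT => [|n IH] G V sGV cardV.
  case: (eqVneq G set0) => [-> | nG0]; first by rewrite cards0.
  have sG1 : G \subset [set set0].
    apply/subsetP => A /sGV; rewrite inE -subset0.
    by move/subset_trans; apply; rewrite subset0 -cards_eq0 cardV.
  apply: leq_trans (subset_leq_card sG1) _; rewrite cards1.
  by apply/card_gt0P; exists set0; rewrite inE shattered0.
have /card_gt0P[y yV] : 0 < #|V| by rewrite cardV.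
have cardV' : #|V :\ y| = n by move: cardV; rewrite (cardsD1 y V) yV => -[].
have sub_del : forall A, A \in delete_family G y -> A \subset V :\ y.
  by move=> _ /imsetP[A AG ->]; apply/setSD/sGV.
have sub_link : forall A, A \in link_family G y -> A \subset V :\ y.
  move=> A; rewrite inE => /andP[AG /andP[yA _]].
  apply/subsetP => x xA; rewrite !inE (subsetP (sGV _ AG)) // andbT.
  by apply: contraNneq yA => <-.
apply: leq_trans (card_delete_link G y) _.
apply: leq_trans (card_shattered_delete_link G y).
by apply: leq_add; [apply: IH sub_del cardV' | apply: IH sub_link cardV'].
Qed.

Lemma card_small_subsets Y d :
  #|[set S : {set U} | S \subset Y & #|S| <= d]| = \sum_(i < d.+1) 'C(#|Y|, i).
Proof.
elim: d => [|d IH].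
  by rewrite big_ord1 -cards_draws; apply: eq_card => S; rewrite !inE leqn0.
rewrite big_ord_recr /= -IH -cards_draws -cardsUI.
have -> : [set S : {set U} | S \subset Y & #|S| <= d] :&:
          [set S : {set U} | S \subset Y & #|S| == d.+1] = set0.
  apply/setP => S; rewrite !inE; apply/negP => /andP[/andP[_ le_Sd] /andP[_ /eqP eS]].
  by rewrite eS ltnn in le_Sd.
rewrite cards0 addn0; apply: eq_card => S; rewrite !inE.
by rewrite leq_eqVlt ltnS; case: (S \subset Y); rewrite //= orbC.
Qed.

Lemma sauer_shelah G Y d :
  (forall S, shattered G S -> #|S| <= d) ->
  #|[set A :&: Y | A in G]| <= \sum_(i < d.+1) 'C(#|Y|, i).
Proof.
move=> vcG; apply: leq_trans (card_le_shattered_sets _) _.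
rewrite -card_small_subsets; apply/subset_leq_card/subsetP => S.
rewrite !inE => /shatteredP sh.
have sSY : S \subset Y.
  have [_ /imsetP[A _ ->] <-] := sh S (subxx S).
  exact: subset_trans (subsetIl _ _) (subsetIr _ _).
rewrite sSY; apply/vcG/shatteredP => B /sh[_ /imsetP[A AG ->] <-].
by exists A; rewrite // -setIA (setIidPr sSY).
Qed.

End Shattering.

Lemma card_le_sum_cover (I V : finType) (S : {set V}) (J : {set I}) (G : I -> {set V}) :
  (forall v, v \in S -> exists2 j, j \in J & v \in G j) ->
  #|S| <= \sum_(j in J) #|G j|.
Proof.
move=> cover.
have -> : \sum_(j in J) #|G j| = \sum_(v : V) \sum_(j in J) (v \in G j : nat).
  rewrite exchange_big /=; apply: eq_bigr => j _.
  by rewrite -sum1_card big_mkcond /=; apply: eq_bigr => v; case: (v \in G j).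
rewrite -sum1_card big_mkcond /=; apply: leq_sum => v _.
by case: ifP => // /cover[j jJ vG]; rewrite (bigD1 j) //= vG.
Qed.

Lemma card_set_sum (V : finType) (P : pred V) : #|[set v | P v]| = \sum_(v : V) P v.
Proof. by rewrite -sum1_card big_mkcond /=; apply: eq_bigr => v; rewrite inE. Qed.

Lemma card_pairs (T1 T2 : finType) (P : {set T1 * T2}) :
  #|P| = \sum_(s : T1) #|[set s' : T2 | (s, s') \in P]|.
Proof.
under eq_bigr do rewrite card_set_sum.
by rewrite pair_big /= -sum1_card big_mkcond /=; apply: eq_bigr => -[s s'].
Qed.

Section Hits.
Variables (U : finType) (m : nat).
Local Notation T := {ffun 'I_m -> U}.

Definition hits (s : T) (A : {set U}) := #|[set i | s i \in A]|.

Lemma card_tuples : #|{: T}| = #|U| ^ m.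
Proof. by rewrite card_ffun card_ord. Qed.

Lemma card_hit_at (i : 'I_m) (A : {set U}) :
  #|[set s : T | s i \in A]| * #|U| = #|A| * #|U| ^ m.
Proof.
have -> : [set s : T | s i \in A] =
    setXn (fun j : 'I_m => if j == i then A else [set: U]).
  apply/setP => s; rewrite inE in_setXn; apply/idP/forallP => [sA j | /(_ i)].
    by case: (j =P i) => [-> | _] //; rewrite inE.
  by rewrite eqxx.
rewrite cardsXn (bigD1 i) //= eqxx.
rewrite (eq_bigr (fun _ => #|U|)); last by move=> j /negbTE ->; rewrite cardsT.
rewrite prod_nat_const cardC1 card_ord -mulnA -expnSr.
by case: m i => [[]|n].
Qed.

Lemma sum_hits (A : {set U}) : (\sum_(s : T) hits s A) * #|U| = m * #|A| * #|U| ^ m.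
Proof.
rewrite /hits; under eq_bigr do rewrite card_set_sum.
rewrite exchange_big /= big_distrl /=.
under eq_bigr => i _ do rewrite -card_set_sum card_hit_at.
by rewrite sum_nat_const card_ord mulnA.
Qed.

(* A set of density above [1/r] is hit [m |A| / |U| > 2 l] times on average,
   and at most [m] times, so at least [l] times with frequency above [1/(2 r)]. *)
Lemma card_many_hits (A : {set U}) r l :
  m = 2 * r * l -> 0 < m -> #|U| < r * #|A| ->
  #|U| ^ m < 2 * r * #|[set s : T | l <= hits s A]|.
Proof.
move=> em m0 dense.
set G := [set s : T | l <= hits s A]; set N := #|U|.
have A0 : 0 < #|A| by move: dense; case: #|A| => //; rewrite muln0.
have N0 : 0 < N by apply: leq_trans A0 (max_card _).
have sum_le : \sum_(s : T) hits s A <= m * #|G| + l * N ^ m.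
  rewrite (bigID (mem G)) /=; apply: leq_add.
    rewrite -sum1_card big_distrr /= muln1; apply: leq_sum => s _.
    by apply: leq_trans (max_card _) _; rewrite card_ord.
  apply: leq_trans (_ : \sum_(s : T | s \notin G) l <= _).
    by apply: leq_sum => s; rewrite inE -ltnNge => /ltnW.
  rewrite sum_nat_const mulnC leq_mul2l; apply/orP; right.
  by rewrite -card_tuples max_card.
have := sum_hits A; move: sum_le; set P := N ^ m; set g := #|G| => sum_le sumE.
have Pm0 : 0 < P * m by rewrite muln_gt0 expn_gt0 N0.
have lt1 : P * m * N < r * (m * #|A| * P).
  have lt : N * (P * m) < r * #|A| * (P * m) by rewrite ltn_pmul2r.
  clear -lt; nia.
have le2 : r * (m * #|A| * P) <= r * ((m * g + l * P) * N).
  by rewrite leq_mul2l -sumE leq_mul2r sum_le !orbT.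
have lt3 : P * m < r * (m * g + l * P).
  by rewrite -(ltn_pmul2r N0) -[r * _ * N]mulnA; apply: leq_trans lt1 le2.
rewrite -(ltn_pmul2r m0); rewrite mulnDr em in lt3; clear -lt3 em m0; nia.
Qed.

End Hits.

Section Swap.
Variables (U : finType) (m : nat).
Local Notation T := {ffun 'I_m -> U}.

Definition swap_at (sg : {ffun 'I_m -> bool}) (z : T * T) : T * T :=
  ([ffun i => if sg i then z.2 i else z.1 i], [ffun i => if sg i then z.1 i else z.2 i]).

Lemma swap_atK sg : involutive (swap_at sg).
Proof. by case=> s s'; congr (_, _); apply/ffunP => i; rewrite !ffunE; case: (sg i). Qed.

(* A swap pattern keeping [B] out of the first tuple is forced at each of the
   (at least [l]) positions where exactly one of the two tuples lies in [B]. *)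
Lemma card_swaps_separating (z : T * T) (B : {set U}) l :
  2 ^ l * #|[set sg : {ffun 'I_m -> bool} |
      [forall i, (swap_at sg z).1 i \notin B] && (l <= hits (swap_at sg z).2 B)]| <= 2 ^ m.
Proof.
set G := [set sg | _].
case: (set_0Vmem G) => [-> | [sg0 sg0G]]; first by rewrite cards0 muln0.
set D := [set i : 'I_m | (z.1 i \in B) != (z.2 i \in B)].
have lD : l <= #|D|.
  move: sg0G; rewrite inE => /andP[/forallP miss many].
  apply/(leq_trans many)/subset_leq_card/subsetP => i.
  rewrite !inE /swap_at /= !ffunE; move: (miss i); rewrite /swap_at /= ffunE.
  by case: (sg0 i); case: (z.1 i \in B); case: (z.2 i \in B).
have sGX : G \subset setXn (fun i : 'I_m => if i \in D then [set z.1 i \in B] else [set: bool]).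
  apply/subsetP => sg; rewrite inE in_setXn => /andP[/forallP miss _].
  apply/forallP => i; case: ifP => iD; last by rewrite inE.
  move: (miss i) iD; rewrite /swap_at /= ffunE !inE.
  by case: (sg i); case: (z.1 i \in B); case: (z.2 i \in B).
have := subset_leq_card sGX; rewrite cardsXn (bigID (mem D)) /= big1; last first.
  by move=> i ->; rewrite cards1.
rewrite mul1n (eq_bigr (fun _ => 2)); last by move=> i /negbTE ->; rewrite cardsT card_bool.
rewrite prod_nat_const; set c := #|_| => cardG.
have cardD : #|D| + c = m by have := cardC (mem D); rewrite card_ord.
apply: leq_trans (leq_mul (leqnn _) cardG) _.
by rewrite -expnD leq_exp2l //; lia.
Qed.

End Swap.

Section EpsNet.
Variables (U : finType) (Fs : {set {set U}}) (d r l m : nat).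
Hypothesis em : m = 2 * r * l.
Hypothesis vcFs : forall S, shattered Fs S -> #|S| <= d.
Hypothesis r0 : 0 < r.
Hypothesis large_l : 2 * r * 'C(2 * m + d, d) < 2 ^ l.
Local Notation T := {ffun 'I_m -> U}.
Local Notation N := #|U|.

Definition heavy (A : {set U}) := N < r * #|A|.

Definition missing_nets :=
  [set s : T | [exists A in Fs, heavy A && [forall i, s i \notin A]]].

Definition separated_pairs :=
  [set z : T * T | [exists A in Fs, [forall i, z.1 i \notin A] && (l <= hits z.2 A)]].

Lemma m_gt0 : 0 < m.
Proof.
rewrite em !muln_gt0 r0 /= lt0n; apply: contraTneq large_l => ->.
by rewrite -leqNgt expn0 !muln_gt0 r0 bin_gt0 leq_addl.
Qed.

Lemma card_missing_nets : #|missing_nets| * N ^ m <= 2 * r * #|separated_pairs|.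
Proof.
rewrite card_pairs big_distrr /= -[#|missing_nets|]sum1_card big_distrl /=.
apply: leq_trans (_ : \sum_(s in missing_nets)
    2 * r * #|[set s' : T | (s, s') \in separated_pairs]| <= _); last first.
  by rewrite [X in _ <= X](bigID (mem missing_nets)) /= leq_addr.
apply: leq_sum => s; rewrite mul1n inE => /existsP[A /and3P[AFs hA /forallP miss]].
apply/ltnW/(leq_trans (card_many_hits em m_gt0 hA)).
rewrite leq_mul2l; apply/orP; right; apply/subset_leq_card/subsetP => s'.
by rewrite !inE => many; apply/existsP; exists A; rewrite AFs /= many andbT; apply/forallP.
Qed.

(* The union of the two tuples has at most [C(2m+d, d)] traces of [Fs]. *)
Lemma card_separating_swaps (z : T * T) :
  2 ^ l * #|[set sg | swap_at sg z \in separated_pairs]| <= 'C(2 * m + d, d) * 2 ^ m.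
Proof.
set Y := [set z.1 i | i in 'I_m] :|: [set z.2 i | i in 'I_m].
have cardY : #|Y| <= 2 * m.
  apply: leq_trans (leq_card_setU _ _) _.
  have card_im (f : 'I_m -> U) : #|[set f i | i in 'I_m]| <= m.
    by rewrite -[m in _ <= m]card_ord leq_imset_card.
  by rewrite mul2n -addnn leq_add ?card_im.
set Tr := [set A :&: Y | A in Fs].
have cardTr : #|Tr| <= 'C(2 * m + d, d).
  apply: leq_trans (sauer_shelah Y vcFs) _.
  by apply: leq_trans (sum_bin_le_bin _ _) _; apply: leq_bin2l; rewrite leq_add2r.
have inY sg i : ((swap_at sg z).1 i \in Y) && ((swap_at sg z).2 i \in Y).
  by rewrite /swap_at /= !ffunE !inE; case: (sg i); rewrite ?imset_f ?orbT.
pose G (B : {set U}) := [set sg : {ffun 'I_m -> bool} |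
  [forall i, (swap_at sg z).1 i \notin B] && (l <= hits (swap_at sg z).2 B)].
apply: leq_trans (leq_mul (leqnn _) (card_le_sum_cover (J := Tr) (G := G) _)) _.
- move=> sg; rewrite !inE => /existsP[A /andP[AFs /andP[/forallP miss many]]].
  exists (A :&: Y); first exact: imset_f.
  rewrite inE; apply/andP; split.
    by apply/forallP => i; rewrite inE negb_and miss.
  apply/(leq_trans many)/subset_leq_card/subsetP => i; rewrite inE => hi.
  by rewrite inE in_setI hi; case/andP: (inY sg i).
rewrite big_distrr /=; apply: leq_trans (_ : \sum_(B in Tr) 2 ^ m <= _).
  by apply: leq_sum => B _; apply: card_swaps_separating.
by rewrite sum_nat_const leq_mul2r cardTr orbT.
Qed.

(* Double counting over (swap pattern, pair): each swap permutes the pairs. *)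
Lemma card_separated_pairs :
  2 ^ l * #|separated_pairs| <= N ^ m * N ^ m * 'C(2 * m + d, d).
Proof.
have swap_card sg : #|[set z | swap_at sg z \in separated_pairs]| = #|separated_pairs|.
  rewrite -[RHS](card_preimset _ (inv_inj (@swap_atK U m sg))).
  by apply: eq_card => z; rewrite !inE.
have sum_swaps : \sum_(sg : {ffun 'I_m -> bool})
    #|[set z | swap_at sg z \in separated_pairs]| = 2 ^ m * #|separated_pairs|.
  under eq_bigr do rewrite swap_card.
  by rewrite sum_nat_const card_ffun card_ord card_bool.
have : 2 ^ m * (2 ^ l * #|separated_pairs|) <= 2 ^ m * (N ^ m * N ^ m * 'C(2 * m + d, d)).
  rewrite mulnCA -sum_swaps.
  under eq_bigr do rewrite card_set_sum.
  rewrite exchange_big big_distrr /=.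
  under eq_bigr do rewrite -card_set_sum.
  apply: leq_trans (_ : \sum_(z : T * T) 'C(2 * m + d, d) * 2 ^ m <= _).
    by apply: leq_sum => z _; apply: card_separating_swaps.
  by rewrite sum_nat_const card_prod card_tuples mulnA mulnC.
by rewrite leq_pmul2l // expn_gt0.
Qed.

Lemma card_missing_nets_lt : 0 < N -> #|missing_nets| < N ^ m.
Proof.
move=> N0; have P0 : 0 < N ^ m by rewrite expn_gt0 N0.
rewrite ltnNge; apply/negP => le_P_missing.
have : N ^ m * N ^ m * 2 ^ l < N ^ m * N ^ m * 2 ^ l.
  apply: (@leq_ltn_trans (2 * r * (2 ^ l * #|separated_pairs|))).
    rewrite mulnC [2 * r * _]mulnCA leq_mul2l; apply/orP; right.
    by apply: leq_trans card_missing_nets; rewrite leq_mul2r le_P_missing orbT.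
  apply: (@leq_ltn_trans (2 * r * (N ^ m * N ^ m * 'C(2 * m + d, d)))).
    by rewrite leq_mul2l card_separated_pairs orbT.
  by rewrite mulnCA ltn_pmul2l ?muln_gt0 ?P0.
by rewrite ltnn.
Qed.

Theorem eps_net_exists : exists Q : {set U}, #|Q| <= m /\
  forall A, A \in Fs -> heavy A -> exists2 x, x \in A & x \in Q.
Proof.
case: (posnP N) => [N0 | /card_missing_nets_lt card_missing].
  exists set0; split=> [|A _]; first by rewrite cards0.
  by rewrite /heavy N0; have := max_card A; rewrite N0 leqn0 => /eqP ->; rewrite muln0.
have [s sNmiss] : exists s : T, s \notin missing_nets.
  apply/existsP; rewrite -negb_forall; apply: contraTN card_missing => /forallP all_miss.
  rewrite -leqNgt -card_tuples; apply/subset_leq_card/subsetP => s _.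
  exact: all_miss.
exists [set s i | i in 'I_m]; split; first by rewrite -[m in _ <= m]card_ord leq_imset_card.
move=> A AFs hA; move: sNmiss; rewrite inE negb_exists => /forallP /(_ A).
rewrite AFs hA /= negb_forall => /existsP[i]; rewrite negbK => siA.
by exists (s i); rewrite ?imset_f.
Qed.

End EpsNet.

Section In.
Variable T : Type.
Implicit Types (x z : T) (s : seq T).

Lemma In_cat z s1 s2 : In z (s1 ++ s2) <-> In z s1 \/ In z s2.
Proof. by elim: s1 => [|x s IH] /=; [split; [right|case] | rewrite IH; tauto]. Qed.

Lemma In_rcons z x s : In z (rcons s x) <-> In z s \/ z = x.
Proof. by rewrite -cats1 In_cat /=; split => [[|[<-|[]]]|[|->]]; auto. Qed.

Lemma In_take z n s : In z (take n s) -> In z s.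
Proof. by elim: s n => [|x s IH] [|n] //= [->|/IH]; auto. Qed.

Lemma In_drop z n s : In z (drop n s) -> In z s.
Proof. by elim: s n => [|x s IH] [|n] //= /IH; auto. Qed.

Lemma In_nth x0 s i : i < size s -> In (nth x0 s i) s.
Proof. by elim: s i => [|x s IH] [|i] //= lt_i; [left | right; apply: IH]. Qed.

Lemma In_nth_index z s : In z s -> exists2 i, i < size s & nth z s i = z.
Proof. by elim: s => [|x s IH] //= [-> | /IH[i lt_i nth_i]]; [exists 0 | exists i.+1]. Qed.

Lemma In_map (U : Type) (f : T -> U) s x : In x s -> In (f x) (map f s).
Proof. by elim: s => [|y s IH] //= [-> | /IH]; auto. Qed.

Lemma In_mapP (U : Type) (f : T -> U) s u : In u (map f s) -> exists2 x, In x s & u = f x.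
Proof.
elim: s => [|x s IH] //= [<- | /IH[y]]; first by exists x; auto.
by exists y; auto.
Qed.

Lemma In_pmap (U : Type) (f : T -> option U) s x u : In x s -> f x = Some u -> In u (pmap f s).
Proof.
elim: s => [|y s IH] //= [<- -> | /IH fx /fx]; first by left.
by case: (f y) => /=; auto.
Qed.

Lemma In_pmapP (U : Type) (f : T -> option U) s u :
  In u (pmap f s) -> exists2 x, In x s & f x = Some u.
Proof.
elim: s => [|x s IH] //=; case fx: (f x) => [v|] /=; last by case/IH=> y; exists y; auto.
by case=> [<- | /IH[y]]; [exists x; auto | exists y; auto].
Qed.

Lemma In_leq_sum (c : T -> nat) s z : In z s -> c z <= \sum_(x <- s) c x.
Proof.
elim: s => [|x s IH] //= [-> | /IH le_cz]; rewrite big_cons; first exact: leq_addr.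
exact: leq_trans le_cz (leq_addl _ _).
Qed.

End In.

Lemma In_mem (T : eqType) (x : T) s : x \in s -> In x s.
Proof. by elim: s => [|y s IH] //=; rewrite inE => /orP[/eqP ->|/IH]; auto. Qed.

Definition propb (P : Prop) : bool := if excluded_middle_informative P then true else false.

Lemma propbP (P : Prop) : reflect P (propb P).
Proof. by rewrite /propb; case: excluded_middle_informative => p; constructor. Qed.

Definition vc_bounded X (H : hclass X) d := forall n (xs : 'I_n -> X), shatters H xs -> n <= d.

Definition mistake X (h : X -> bool) (z : example X) := h z.1 != z.2.

Section ErrorSets.
Variables (X : Type) (H : hclass X) (d : nat) (U : finType) (ex : U -> example X).
Hypothesis vcH : vc_bounded H d.

Definition error_set h := [set u | mistake h (ex u)].
Definition error_sets := [set E | propb (exists2 h, H h & E = error_set h)].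

(* To realize labels [lab] on the shattered points, realize the error pattern
   "the label of [u] differs from [lab]". *)
Lemma vc_error_sets S : shattered error_sets S -> #|S| <= d.
Proof.
move/shatteredP=> sh; pose xs (j : 'I_#|S|) := (ex (enum_val j)).1.
apply: (@vcH _ xs) => lab.
pose B := [set u in S | [exists j, (enum_val j == u) && (lab j != (ex u).2)]].
have [E] : exists2 E, E \in error_sets & E :&: S = B.
  by apply: sh; apply/subsetP => u; rewrite inE => /andP[].
rewrite inE => /propbP[h Hh ->] eB; exists h; split=> // j.
move/setP: eB => /(_ (enum_val j)); rewrite !inE enum_valP andbT /mistake.
have -> : [exists j', (enum_val j' == enum_val j) && (lab j' != (ex (enum_val j)).2)] =
          (lab j != (ex (enum_val j)).2).
  apply/existsP/idP => [[j' /andP[/eqP/enum_val_inj -> //]] | ne]; by exists j; rewrite eqxx.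
by rewrite /xs; case: (h _); case: (lab j); case: (ex _).2.
Qed.

End ErrorSets.

Section WeightedNets.
Variables (X : Type) (H : hclass X).
Implicit Types (w : example X -> nat) (S Q : sample X).

Definition wsum w S := \sum_(z <- S) w z.
Definition werr w S h := \sum_(z <- S | mistake h z) w z.

Definition is_net r m w S Q := [/\ size Q <= m, subsample Q S &
  forall h, H h -> (forall z, In z Q -> h z.1 = z.2) -> r * werr w S h <= wsum w S].

Section Copies.
Variables (w : example X -> nat) (z0 : example X) (S : sample X).

(* Each example [z] of [S] is replaced by [w z] copies of itself. *)
Definition copies := {i : 'I_(size S) & 'I_(w (nth z0 S i))}.
Definition copy_ex (u : copies) := nth z0 S (tag u).

Lemma card_copies (P : pred (example X)) :
  #|[set u : copies | P (copy_ex u)]| = \sum_(z <- S | P z) w z.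
Proof.
rewrite -sum1_card (eq_bigl (fun u : copies => P (copy_ex u) && xpredT (tagged u))); last first.
  by move=> u; rewrite inE andbT.
rewrite -(@sig_big_dep nat 0 addn 'I_(size S) (fun i => 'I_(w (nth z0 S i)))
  (fun i => P (nth z0 S i)) (fun _ _ => true) (fun _ _ => 1)).
rewrite (big_nth z0) big_mkord; apply: eq_bigr => i _.
by rewrite sum1_card card_ord.
Qed.

End Copies.

Variables (d r l m : nat).
Hypothesis vcH : vc_bounded H d.
Hypothesis em : m = 2 * r * l.
Hypothesis r0 : 0 < r.
Hypothesis large_l : 2 * r * 'C(2 * m + d, d) < 2 ^ l.

(* An eps-net of the error sets on the weighted copies of [S]. *)
Lemma is_net_exists w S : exists Q, is_net r m w S Q.
Proof.
case: S => [|z0 S'].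
  by exists [::]; split=> // h _ _; rewrite /werr /wsum !big_nil muln0.
set S := z0 :: S'.
pose ex := @copy_ex w z0 S.
have [Q [cardQ netQ]] := eps_net_exists em (vc_error_sets (ex := ex) vcH) r0 large_l.
exists [seq ex u | u <- enum Q]; split.
- by rewrite size_map -cardE.
- by move=> z hz; have [u _ ->] := In_mapP hz; apply/In_nth/ltn_ord.
move=> h Hh consistent.
have Eh : error_set ex h \in error_sets H ex.
  by rewrite inE; apply/propbP; exists h.
have cardT : #|{: copies w z0 S}| = wsum w S.
  by rewrite /wsum -(card_copies w z0 S xpredT); apply: eq_card => u; rewrite inE.
rewrite -cardT /werr -(card_copies w z0 S) leqNgt; apply/negP => /(netQ _ Eh)[u].
rewrite /error_set inE /mistake => err uQ; move: err; rewrite consistent ?eqxx //.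
by apply/In_map/In_mem; rewrite mem_enum.
Qed.

End WeightedNets.

(* [C(dK, d) <= (dK)^d / d! <= (8K)^d] with [8K <= 2^(2p+10)]. *)
Lemma bin_net_size_lt p d : 0 < d ->
  2 * 2 ^ p * 'C(2 * (2 * 2 ^ p * (d * (16 * p.+1))) + d, d) < 2 ^ (d * (16 * p.+1)).
Proof.
move=> d0; set r := 2 ^ p; set K := 64 * r * p.+1 + 1.
have -> : 2 * (2 * r * (d * (16 * p.+1))) + d = d * K by rewrite /K; nia.
have bin_le : 'C(d * K, d) <= (8 * K) ^ d.
  have dd0 : 0 < d ^ d by rewrite expn_gt0 d0.
  rewrite -(leq_pmul2l dd0) expnMn.
  have := bin_fact_le_expn (d * K) d; have := expn_self_le_fact d.
  rewrite expnMn; move: (d ^ d) ('C(d * K, d)) (d`!) (8 ^ d) (K ^ d) => D c f E P le_D le_c.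
  have : E * (c * f) <= E * (D * P) by rewrite leq_mul2l le_c orbT.
  have : D * c <= E * f * c by rewrite leq_mul2r le_D orbT.
  nia.
have le_K : 8 * K <= 2 ^ (2 * p + 10).
  have lt_pr : p.+1 <= r by apply: ltn_expl.
  have -> : 2 ^ (2 * p + 10) = r * r * 1024 by rewrite expnD mul2n -addnn expnD.
  rewrite /K; nia.
apply: (@leq_ltn_trans (2 * r * 2 ^ ((2 * p + 10) * d))).
  rewrite leq_mul2l expnM; apply/orP; right.
  exact: leq_trans bin_le (leq_exp2rW _ le_K).
rewrite /r -expnS -expnD ltn_exp2l //; nia.
Qed.

Lemma exists_sum_le_size_mul (T : Type) (c : T -> nat) (W : seq T) : W <> [::] ->
  exists2 z, In z W & \sum_(x <- W) c x <= size W * c z.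
Proof.
elim: W => [//|x [|y W] IH] _.
  by exists x; [left | rewrite big_cons big_nil addn0 mul1n].
have [z Wz le_sum] := IH ltac:(by []).
case: (leqP (c x) (c z)) => [le_xz | lt_zx];
  [exists z; first by right | exists x; first by left]; rewrite big_cons [size _]/= mulSn.
  exact: leq_add.
rewrite leq_add2l; apply: leq_trans le_sum _.
by rewrite leq_mul2l ltnW ?orbT.
Qed.

Section Boosting.
Variables (X : Type) (h : nat -> X -> bool).

Definition mistakes t (z : example X) := count (fun s => mistake (h s) z) (iota 0 t).

Definition potential t z := 2 ^ mistakes t z.

Lemma mistakesS t z : mistakes t.+1 z = mistakes t z + mistake (h t) z.
Proof. by rewrite /mistakes -addn1 iotaD count_cat /= addn0. Qed.

Lemma wsum_potentialS S t :
  wsum (potential t.+1) S = wsum (potential t) S + werr (potential t) S (h t).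
Proof.
rewrite /wsum /werr (big_mkcond (mistake (h t))) -big_split /=.
apply: eq_bigr => z _; rewrite /potential mistakesS.
by case: (mistake _ _); rewrite ?addn0 // addn1 expnS mul2n -addnn.
Qed.

Section Potential.
Variables (r T : nat) (S : sample X).
Hypothesis net_rounds :
  forall t, t < T -> r * werr (potential t) S (h t) <= wsum (potential t) S.

(* Each round multiplies the potential by at most [1 + 1/r]. *)
Lemma wsum_potential_le t : t <= T -> r ^ t * wsum (potential t) S <= r.+1 ^ t * size S.
Proof.
elim: t => [|t IH] le_tT; first by rewrite !mul1n /wsum /potential /mistakes /= sum1_size.
have := IH (ltnW le_tT); have := net_rounds le_tT.
rewrite wsum_potentialS !expnS.
move: (wsum _ S) (werr _ S _) (r ^ t) (r.+1 ^ t) => P E A B le_E le_P.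
have : A * (r * E) <= A * P by rewrite leq_mul2l le_E orbT.
have : r.+1 * (A * P) <= r.+1 * (B * size S) by rewrite leq_mul2l le_P orbT.
nia.
Qed.

Lemma potential_le z : In z S -> r ^ T * 2 ^ mistakes T z <= r.+1 ^ T * size S.
Proof.
move=> Sz; apply: leq_trans (wsum_potential_le (leqnn T)).
by rewrite leq_mul2l (In_leq_sum (potential T) Sz) orbT.
Qed.

End Potential.

(* Every hypothesis of [H] errs on the non-realizable coVC witness, which has at
   most [k] examples: one of them collects a [1/k] share of the mistakes. *)
Lemma coVC_many_mistakes (H : hclass X) k T (S : sample X) :
  coVC_bound H k -> (forall t, t < T -> H (h t)) -> 0 < T -> ~ realizable H S ->
  exists2 z, In z S & T <= k * mistakes T z.
Proof.
move=> coVC Hh T0 /coVC[W [sWS [sizeW nW]]].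
have W_nil : W <> [::].
  by move=> W0; apply: nW; exists (h 0); split=> [|z]; [apply: Hh | rewrite W0].
have errs t : t < T -> exists2 z, In z W & mistake (h t) z.
  move=> ltT; apply: NNPP => no_err; apply: nW; exists (h t); split=> [|z Wz]; first exact: Hh.
  by apply/eqP/negPn/negP => err; apply: no_err; exists z.
have le_sum : T <= \sum_(z <- W) mistakes T z.
  rewrite /mistakes; under eq_bigr do rewrite -sum1_count big_mkcond /=.
  rewrite exchange_big /= -[T in T <= _](size_iota 0 T) -sum1_size.
  rewrite big_seq_cond [X in _ <= X]big_seq_cond.
  apply: leq_sum => t; rewrite andbT mem_iota add0n => /errs[z Wz err].
  by apply: leq_trans (In_leq_sum (fun z => if mistake (h t) z then 1 else 0) Wz); rewrite err.
have [z Wz le_max] := exists_sum_le_size_mul (mistakes T) W_nil.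
exists z; first exact: sWS.
by apply: leq_trans le_sum (leq_trans le_max _); rewrite leq_mul2r sizeW orbT.
Qed.

End Boosting.

(* With [T = r j] rounds, [2^(T/k)] would have to stay below
   [(1 + 1/r)^T 2^j <= 8^j 2^j], which fails for [r > 8k]. *)
Lemma too_many_mistakes r k j c s : 8 * k < r -> 0 < k -> r * j <= c * k -> s < 2 ^ j ->
  r ^ (r * j) * 2 ^ c <= r.+1 ^ (r * j) * s -> False.
Proof.
move=> lt_kr k0 le_c lt_s le_pot.
have c8 : 8 * j <= c.
  rewrite -(leq_pmul2r k0); apply: leq_trans le_c.
  by rewrite mulnAC leq_mul2r ltnW ?orbT.
have succ_le : r.+1 ^ (r * j) <= 8 ^ j * r ^ (r * j).
  by rewrite !expnM -expnMn leq_exp2rW // succ_expn_le.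
have rpos : 0 < r ^ (r * j) by rewrite expn_gt0; apply/orP; left; lia.
have : 2 ^ c <= 8 ^ j * s.
  rewrite -(leq_pmul2l rpos); apply: leq_trans le_pot _.
  by rewrite mulnA [r ^ _ * _]mulnC leq_mul2r succ_le orbT.
have : 8 ^ j * s < 2 ^ (4 * j).
  by rewrite expnM -[2 ^ 4]/(8 * 2) expnMn ltn_pmul2l ?expn_gt0.
have : 2 ^ (4 * j) <= 2 ^ c by rewrite leq_exp2l //; lia.
lia.
Qed.

Theorem boosting_realizable X (H : hclass X) k r j (h : nat -> X -> bool) (Sa Sb : sample X) :
  coVC_bound H k -> 0 < k -> 8 * k < r -> 0 < j ->
  size Sa < 2 ^ j -> size Sb < 2 ^ j -> (forall t, t < r * j -> H (h t)) ->
  (forall t, t < r * j -> r * werr (potential h t) Sa (h t) <= wsum (potential h t) Sa) ->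
  (forall t, t < r * j -> r * werr (potential h t) Sb (h t) <= wsum (potential h t) Sb) ->
  realizable H (Sa ++ Sb).
Proof.
move=> coVC k0 lt_kr j0 sizeSa sizeSb Hh net_a net_b; apply: NNPP => nR.
have T0 : 0 < r * j by rewrite muln_gt0 j0 andbT; lia.
have [z /In_cat Sz many] := coVC_many_mistakes coVC Hh T0 nR.
have [S [net_S sizeS zS]] : exists S : sample X,
    [/\ forall t, t < r * j -> r * werr (potential h t) S (h t) <= wsum (potential h t) S,
        size S < 2 ^ j & In z S].
  by case: Sz => zS; [exists Sa | exists Sb].
apply: (too_many_mistakes lt_kr k0 _ sizeS (potential_le net_S zS)).
by rewrite [_ * k]mulnC.
Qed.

Section Protocol.
Variables (X : Type) (H : hclass X) (r m : nat).
Implicit Types (S Q : sample X) (tr : seq (message X)).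

(* Round [t] occupies positions [t * round_len + j]: Alice's net for [j < m],
   Bob's net for [m <= j < 2 m], then Alice's and Bob's continue bits. *)
Definition round_len := (2 * m).+2.

Definition round_of tr := size tr %/ round_len.
Definition pos_of tr := size tr %% round_len.

Definition chosen_net (w : example X -> nat) S : sample X :=
  epsilon (inhabits [::]) (is_net H r m w S).

Definition example_of (msg : message X) := if msg is MEx z then Some z else None.

Definition round_examples tr t :=
  pmap example_of (take (2 * m) (drop (t * round_len) tr)).

Definition consistent_hyp Q : X -> bool :=
  epsilon (inhabits (fun _ => true)) (fun h => H h /\ forall z, In z Q -> h z.1 = z.2).

Definition round_hyp tr t := consistent_hyp (round_examples tr t).

Definition net_msg S tr j :=
  nth (MBit X false) [seq MEx z | z <- chosen_net (potential (round_hyp tr) (round_of tr)) S] j.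

Definition rounds_needed S := r * (trunc_log 2 (size S)).+1.

Definition continue_bit S tr := MBit X ((round_of tr).+1 < rounds_needed S).

Definition alice_move S tr :=
  if pos_of tr < m then net_msg S tr (pos_of tr) else continue_bit S tr.

Definition bob_move S tr :=
  if (m <= pos_of tr) && (pos_of tr < 2 * m) then net_msg S tr (pos_of tr - m)
  else continue_bit S tr.

Definition alice_turn tr := (pos_of tr < m) || (pos_of tr == 2 * m).

Definition is_stop (msg : message X) := if msg is MBit false then true else false.

Lemma is_stop_bit b : is_stop (MBit X b) = ~~ b.
Proof. by case: b. Qed.

(* On the empty transcript the default [MBit X true] is read: not a stop bit. *)
Definition halted tr := [&& pos_of tr == 0,
  is_stop (nth (MBit X true) tr (size tr - 2)) & is_stop (nth (MBit X true) tr (size tr - 1))].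

Definition accepts tr :=
  propb (forall t, t < round_of tr -> realizable H (round_examples tr t)).

Definition realizability_protocol : protocol X :=
  Protocol (fun tr => if halted tr then None else Some (if alice_turn tr then Alice else Bob))
    alice_move bob_move accepts.

Lemma net_msg_from S S' tr j :
  subsample (chosen_net (potential (round_hyp tr) (round_of tr)) S) S' ->
  msg_from S' (net_msg S tr j).
Proof.
rewrite /net_msg; case: (chosen_net _ S) => [|z0 Q] sub; first by rewrite nth_nil.
case: (ltnP j (size (z0 :: Q))) => [lt_j | le_j]; last by rewrite nth_default ?size_map.
by rewrite (nth_map z0) //; apply/sub/In_nth.
Qed.

Section Run.
Variables (Sa Sb : sample X).

Definition honest_move tr := if alice_turn tr then alice_move Sa tr else bob_move Sb tr.

Definition run n := iter n (fun tr => rcons tr (honest_move tr)) [::].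

Definition rounds := maxn (rounds_needed Sa) (rounds_needed Sb).

Lemma size_run n : size (run n) = n.
Proof. by elim: n => //= n IH; rewrite size_rcons IH. Qed.

Lemma take_run q n : q <= n -> take q (run n) = run q.
Proof.
elim: n => [|n IH]; first by rewrite leqn0 => /eqP ->.
rewrite leq_eqVlt => /orP[/eqP -> | ]; first by rewrite take_oversize // size_run.
rewrite ltnS => le_qn; rewrite /= -cats1 take_cat size_run ltn_neqAle le_qn andbT.
by case: eqP => [-> | _]; rewrite ?subnn ?take0 ?cats0 ?IH.
Qed.

Lemma nth_run x0 q n : q < n -> nth x0 (run n) q = honest_move (run q).
Proof.
move=> lt_qn; rewrite -(nth_take x0 (ltnSn q)) take_run //= nth_rcons size_run.
by rewrite ltnn eqxx.
Qed.

Lemma round_run t j : j < round_len -> round_of (run (t * round_len + j)) = t.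
Proof. by move=> lt_j; rewrite /round_of size_run divnMDl // divn_small // addn0. Qed.

Lemma pos_run t j : j < round_len -> pos_of (run (t * round_len + j)) = j.
Proof. by move=> lt_j; rewrite /pos_of size_run modnMDl modn_small. Qed.

Lemma honest_move_net_a t j : j < m ->
  honest_move (run (t * round_len + j)) = net_msg Sa (run (t * round_len + j)) j.
Proof.
move=> lt_jm; rewrite /honest_move /alice_turn /alice_move pos_run ?lt_jm //.
by rewrite /round_len; lia.
Qed.

Lemma honest_move_net_b t j : j < m ->
  honest_move (run (t * round_len + (m + j))) = net_msg Sb (run (t * round_len + (m + j))) j.
Proof.
move=> lt_jm; rewrite /honest_move /alice_turn /bob_move pos_run; last by rewrite /round_len; lia.
have -> : (m + j < m) || (m + j == 2 * m) = false by lia.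
by rewrite leq_addr /= addKn ifT //; lia.
Qed.

Lemma honest_move_bit_a t :
  honest_move (run (t * round_len + 2 * m)) = MBit X (t.+1 < rounds_needed Sa).
Proof.
have lt_L : 2 * m < round_len by [].
rewrite /honest_move /alice_turn /alice_move /continue_bit pos_run ?round_run //.
by rewrite eqxx orbT ltnNge leq_pmull.
Qed.

Lemma honest_move_bit_b t :
  honest_move (run (t * round_len + (2 * m).+1)) = MBit X (t.+1 < rounds_needed Sb).
Proof.
have lt_L : (2 * m).+1 < round_len by [].
rewrite /honest_move /alice_turn /bob_move /continue_bit ?pos_run ?round_run //.
have -> : ((2 * m).+1 < m) || ((2 * m).+1 == 2 * m) = false by lia.
by have -> : (m <= (2 * m).+1 < 2 * m) = false by lia.
Qed.

Hypothesis r0 : 0 < r.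

Lemma rounds_gt0 : 0 < rounds.
Proof. by rewrite leq_max /rounds_needed muln_gt0 r0. Qed.

Lemma halted_run q : q <= rounds * round_len -> halted (run q) = (q == rounds * round_len).
Proof.
move=> le_q; rewrite /halted /pos_of size_run.
case: (eqVneq (q %% round_len) 0) => [q_mod | q_mod]; last first.
  by apply/esym/negbTE; apply: contra q_mod => /eqP ->; rewrite modnMl.
have eq_q : q = q %/ round_len * round_len by rewrite {1}(divn_eq q round_len) q_mod addn0.
move: (q %/ round_len) eq_q le_q => [|t] -> le_t; rewrite andTb.
  by rewrite mul0n /=; apply/esym/negbTE; rewrite eq_sym -lt0n muln_gt0 rounds_gt0.
have pos_a : t.+1 * round_len - 2 = t * round_len + 2 * m by rewrite mulSn /round_len; lia.
have pos_b : t.+1 * round_len - 1 = t * round_len + (2 * m).+1 by rewrite mulSn /round_len; lia.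
rewrite pos_a pos_b !nth_run ?honest_move_bit_a ?honest_move_bit_b; last 2 first.
- by rewrite -pos_b; lia.
- by rewrite -pos_a; lia.
rewrite !is_stop_bit -!leqNgt -geq_max eqn_mul2r /=.
by move: le_t; rewrite leq_mul2r /= => le_t; rewrite eqn_leq le_t.
Qed.

Local Notation N := (rounds * round_len).

Lemma transcript_run q : q <= N -> transcript realizability_protocol Sa Sb q = run q.
Proof.
elim: q => [|q IH] // lt_q.
rewrite /transcript iterS -/(transcript _ _ _ q) IH ?(ltnW lt_q) //.
rewrite /step /= halted_run ?(ltnW lt_q) // (ltn_eqF lt_q).
by rewrite /honest_move; case: (alice_turn _).
Qed.

Lemma transcript_halts B : N <= B ->
  transcript realizability_protocol Sa Sb B = run N /\
  next_speaker realizability_protocol (run N) = None.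
Proof.
have halts : next_speaker realizability_protocol (run N) = None by rewrite /= halted_run ?eqxx.
move=> le_NB; split=> //; elim: B le_NB => [|B IH].
  by rewrite leqn0 muln_eq0 (negbTE (lt0n_neq0 rounds_gt0)).
rewrite leq_eqVlt => /orP[/eqP <- | ]; first by rewrite transcript_run.
by rewrite ltnS => /IH run_N; rewrite /transcript iterS -/(transcript _ _ _ B) run_N /step halts.
Qed.

End Run.

Section Correctness.
Variables (d l : nat).
Hypothesis vcH : vc_bounded H d.
Hypothesis em : m = 2 * r * l.
Hypothesis r0 : 0 < r.
Hypothesis large_l : 2 * r * 'C(2 * m + d, d) < 2 ^ l.

Lemma chosen_net_spec w S : is_net H r m w S (chosen_net w S).
Proof. by apply: epsilon_spec; apply: (is_net_exists vcH em r0 large_l). Qed.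

Lemma consistent_hyp_spec Q : realizable H Q ->
  H (consistent_hyp Q) /\ forall z, In z Q -> consistent_hyp Q z.1 = z.2.
Proof.
move=> realQ; apply: (epsilon_spec (inhabits (fun=> true))
  (fun g => H g /\ forall z, In z Q -> g z.1 = z.2)).
by case: realQ => h hQ; exists h.
Qed.

Lemma realizability_protocol_valid : valid_protocol realizability_protocol.
Proof.
have net_from S tr j : msg_from S (net_msg S tr j).
  by apply: net_msg_from; case: (chosen_net_spec (potential (round_hyp tr) (round_of tr)) S).
by split=> S tr /=; [rewrite /alice_move | rewrite /bob_move]; case: ifP.
Qed.

Lemma round_examples_take tr q t : t * round_len + 2 * m <= q ->
  round_examples (take q tr) t = round_examples tr t.
Proof. by move=> le_q; rewrite /round_examples !take_drop take_takel // addnC. Qed.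

Variables (Sa Sb : sample X).
Local Notation run := (run Sa Sb).
Local Notation rounds := (rounds Sa Sb).
Local Notation N := (rounds * round_len).

(* The weights of round [t] only read the examples of rounds [s < t]. *)
Lemma potential_run t q n : t * round_len <= q -> q <= n ->
  potential (round_hyp (run q)) t = potential (round_hyp (run n)) t.
Proof.
move=> le_q le_qn; rewrite /potential /mistakes.
apply: functional_extensionality => z; congr (2 ^ _); apply: eq_in_count => s.
rewrite mem_iota add0n => /andP[_ lt_st] /=.
rewrite /round_hyp -(take_run _ _ le_qn) round_examples_take //.
apply: leq_trans le_q; apply: leq_trans (_ : s.+1 * round_len <= _).
  by rewrite [s.+1 * _]mulSn addnC leq_add2r; apply/leqW/leqnSn.
by rewrite leq_mul2r lt_st orbT.
Qed.

Lemma In_run_from n x : In x (run n) -> msg_from (Sa ++ Sb) x.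
Proof.
elim: n => [|n IH] //= /In_rcons[/IH // | ->].
have net_from S tr j : subsample S (Sa ++ Sb) -> msg_from (Sa ++ Sb) (net_msg S tr j).
  move=> sub; apply: net_msg_from => z zQ; apply: sub.
  by case: (chosen_net_spec (potential (round_hyp tr) (round_of tr)) S) => _ /(_ z zQ).
rewrite /honest_move /alice_move /bob_move /continue_bit.
by case: ifP => _; case: ifP => _ //; apply: net_from => z zS; apply/In_cat; [left | right].
Qed.

Lemma net_in_round S o t z : o <= m -> t < rounds ->
  (forall j, j < m -> honest_move Sa Sb (run (t * round_len + (o + j))) =
                      net_msg S (run (t * round_len + (o + j))) j) ->
  In z (chosen_net (potential (round_hyp (run N)) t) S) -> In z (round_examples (run N) t).
Proof.
move=> le_om lt_t net_moves zQ.
have [size_Q _ _] := chosen_net_spec (potential (round_hyp (run N)) t) S.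
have [j lt_j nth_j] := In_nth_index zQ.
have lt_jm : j < m := leq_trans lt_j size_Q.
have eL : round_len = (2 * m).+2 by [].
have le_tN : t * round_len + round_len <= N by rewrite addnC -mulSn leq_mul2r lt_t orbT.
have lt_qN : t * round_len + (o + j) < N by lia.
have msg_q : nth (MBit X true) (run N) (t * round_len + (o + j)) = MEx z.
  rewrite nth_run // net_moves // /net_msg round_run; last by lia.
  by rewrite (potential_run (leq_addr _ _) (ltnW lt_qN)) (nth_map z) // nth_j.
apply: (@In_pmap _ _ _ _ (MEx z)) => //.
have <- : nth (MBit X true) (take (2 * m) (drop (t * round_len) (run N))) (o + j) = MEx z.
  by rewrite nth_take ?nth_drop //; lia.
by apply: In_nth; rewrite size_takel ?size_drop ?size_run; lia.
Qed.

Lemma round_examples_from t z : In z (round_examples (run N) t) -> In z (Sa ++ Sb).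
Proof.
move=> zR; have [[z' | //] z'R [<-]] := In_pmapP zR.
exact: (In_run_from (In_drop (In_take z'R))).
Qed.

Lemma round_net_bound S o t : o <= m -> t < rounds ->
  (forall j, j < m -> honest_move Sa Sb (run (t * round_len + (o + j))) =
                      net_msg S (run (t * round_len + (o + j))) j) ->
  realizable H (round_examples (run N) t) ->
  r * werr (potential (round_hyp (run N)) t) S (round_hyp (run N) t) <=
  wsum (potential (round_hyp (run N)) t) S.
Proof.
move=> le_om lt_t net_moves /consistent_hyp_spec[Hh h_cons].
case: (chosen_net_spec (potential (round_hyp (run N)) t) S) => _ _; apply=> // z zQ.
exact/h_cons/(net_in_round le_om lt_t net_moves zQ).
Qed.

Variable k : nat.
Hypothesis coVC : coVC_bound H k.
Hypothesis k0 : 0 < k.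
Hypothesis lt_kr : 8 * k < r.

Theorem accepts_run_iff : accepts (run N) <-> realizable H (Sa ++ Sb).
Proof.
rewrite /accepts /round_of size_run mulnK //.
split=> [/propbP real_rounds | [g [Hg g_cons]]]; last first.
  by apply/propbP => t _; exists g; split=> // z /round_examples_from; apply: g_cons.
pose j := maxn (trunc_log 2 (size Sa)).+1 (trunc_log 2 (size Sb)).+1.
have rounds_j : rounds = r * j by rewrite /rounds /rounds_needed maxnMr.
have size_lt S : (trunc_log 2 (size S)).+1 <= j -> size S < 2 ^ j.
  by move=> le_j; apply: leq_trans (trunc_log_ltn (size S) (isT : 1 < 2)) _; rewrite leq_exp2l.
apply: (boosting_realizable coVC k0 lt_kr (j := j) (h := round_hyp (run N))); rewrite -?rounds_j.
- by rewrite leq_max.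
- exact/size_lt/leq_maxl.
- exact/size_lt/leq_maxr.
- by move=> t /real_rounds/consistent_hyp_spec[].
- move=> t lt_t; apply: round_net_bound (leq0n m) lt_t _ (real_rounds t lt_t).
  exact: honest_move_net_a.
- move=> t lt_t; apply: round_net_bound (leqnn m) lt_t _ (real_rounds t lt_t).
  exact: honest_move_net_b.
Qed.

End Correctness.

End Protocol.

Section NetSize.
Variables (d k : nat).

Definition net_log := trunc_log 2 k + 4.
Definition net_ratio := 2 ^ net_log.
Definition net_rate := d * (16 * net_log.+1).
Definition net_size := 2 * net_ratio * net_rate.

Hypothesis k0 : 0 < k.

Lemma net_ratio_gt : 8 * k < net_ratio.
Proof.
have := trunc_log_ltn k (isT : 1 < 2).
by rewrite /net_ratio /net_log expnD expnS -[2 ^ 4]/16; lia.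
Qed.

Lemma net_ratio_le : net_ratio <= 16 * k.
Proof.
have := trunc_logP (isT : 1 < 2) k0.
by rewrite /net_ratio /net_log expnD -[2 ^ 4]/16; lia.
Qed.

Lemma round_len_le : 0 < d -> round_len net_size <= 2 * 2561 * k * d * (trunc_log 2 k).+1.
Proof.
move=> d0; rewrite /round_len /net_size /net_rate /net_log.
have := net_ratio_le; move: net_ratio (trunc_log 2 k) => r t le_r.
have Y0 : 0 < k * d * t.+1 by rewrite !muln_gt0 k0 d0.
have : r * (d * (16 * (t + 4).+1)) <= 1280 * (k * d * t.+1).
  apply: leq_trans (_ : 16 * k * (d * (16 * (5 * t.+1))) <= _).
    by apply: leq_mul => //; rewrite !leq_mul2l; lia.
  by rewrite (_ : 16 * k * _ = 1280 * (k * d * t.+1)) //; nia.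
lia.
Qed.

End NetSize.

Lemma rounds_le X k (Sa Sb : sample X) : 0 < k ->
  rounds (net_ratio k) Sa Sb <= 16 * k * (trunc_log 2 (size Sa + size Sb)).+1.
Proof.
move=> k0; rewrite /rounds /rounds_needed -maxnMr leq_mul ?net_ratio_le //.
by rewrite geq_max !ltnS !leq_trunc_log ?leq_addr ?leq_addl.
Qed.

Lemma protocol_cost X d k (Sa Sb : sample X) : 0 < d -> 0 < k ->
  rounds (net_ratio k) Sa Sb * round_len (net_size d k) <=
  16 * (2 * 2561) * d * k ^ 2 * (trunc_log 2 k).+1 * (trunc_log 2 (size Sa + size Sb)).+1.
Proof.
move=> d0 k0; apply: leq_trans (leq_mul (rounds_le Sa Sb k0) (round_len_le k0 d0)) _.
nia.
Qed.

Lemma vc_bounded_leq X (H : hclass X) d d' : d <= d' -> vc_bounded H d -> vc_bounded H d'.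
Proof. by move=> le_d vcH n xs /vcH /leq_trans; apply. Qed.

Lemma coVC_bound_leq X (H : hclass X) k k' : k <= k' -> coVC_bound H k -> coVC_bound H k'.
Proof.
by move=> le_k coVC S /coVC[T [sub [sizeT nT]]]; exists T; rewrite (leq_trans sizeT).
Qed.

Lemma trunc_log_max1 k : trunc_log 2 (maxn k 1) = trunc_log 2 k.
Proof. by case: (posnP k) => [-> | /maxn_idPl ->]; rewrite ?trunc_log1 ?trunc_log0. Qed.

Theorem lemma6 :
  exists C : nat,
  forall (X : Type) (H : hclass X) (d k : nat),
    VC_dim H d -> coVC_dim H k ->
    exists P : protocol X,
      valid_protocol P /\
      forall Sa Sb : sample X,
        solves_within H P Sa Sb
          (C * maxn d 1 * (maxn k 1) ^ 2 * (trunc_log 2 k).+1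
             * (trunc_log 2 (size Sa + size Sb)).+1).
Proof.
exists (16 * (2 * 2561)) => X H d k [_ vcH] [coVC _].
set d' := maxn d 1; set k' := maxn k 1.
have d0 : 0 < d' by rewrite leq_max orbT.
have k0 : 0 < k' by rewrite leq_max orbT.
have vcH' : vc_bounded H d' by apply: vc_bounded_leq vcH; apply: leq_maxl.
have coVC' : coVC_bound H k' by apply: coVC_bound_leq coVC; apply: leq_maxl.
have large_l := bin_net_size_lt (net_log k') d0.
have r0 : 0 < net_ratio k' by rewrite expn_gt0.
have em : net_size d' k' = 2 * net_ratio k' * net_rate d' k' by [].
exists (realizability_protocol H (net_ratio k') (net_size d' k')).
split=> [|Sa Sb]; first exact: (realizability_protocol_valid vcH' em r0 large_l).
have cost := protocol_cost Sa Sb d0 k0; rewrite trunc_log_max1 in cost.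
rewrite /solves_within -/d' -/k'; have [-> halts] := transcript_halts H r0 cost.
by split=> //; apply: (accepts_run_iff vcH' em r0 large_l Sa Sb coVC' k0 (net_ratio_gt k0)).
Qed.
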